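(* Let $\lambda>0$ be a constant and define $V,W:[1,\infty)\to\mathbb R$ by $$V(f)=\frac{\pi}{2^{1/2}}+\lambda(f-1)^{3/2},\qquad W(f)=V(f)^2-\log(4V(f)^2)-f.$$ Suppose that for some fixed $f_1>1$: (a) $0<\lambda<\dfrac{2J(f_1)}{3(f_1-1)}$; (b) $W(f_1)>0$; (c) $W'(f_1)<0$. Then, writing $\beta=\beta(f_0)$, we have $\beta^2-\log(4\beta^2)-f_0>0$ for all $1<f_0<f_1$.
   Context: Let $f(\phi)=e^\phi-\phi$; for $f_1\ge1$ let $\phi_*(f_1)\le0\le\phi^*(f_1)$ be the two solutions of $f(\phi)=f_1$, and $\beta(f_0)=\frac12\int_{\phi_*(f_0)}^{\phi^*(f_0)}\frac{d\phi}{\sqrt{f_0-f(\phi)}}$. For $f>1$ let $h^*(f)>1$ and $h_*(f)\in(0,1)$ be the two solutions $h$ of $h-\log h=f$, and set $J(f)=\frac1{h^*(f)-1}+\frac1{1-h_*(f)}-\big(\frac2{f-1}\big)^{1/2}$. *)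

From Stdlib Require Import Reals ClassicalEpsilon.
From Coquelicot Require Import Coquelicot.
Open Scope R_scope.

Definition fpot (phi : R) : R := exp phi - phi.

(* For f1 >= 1: the two solutions phi_* <= 0 <= phi^* of fpot phi = f1
   (each is unique, so the choice operator picks exactly it). *)
Definition phi_lo (f1 : R) : R :=
  epsilon (inhabits 0) (fun p => p <= 0 /\ fpot p = f1).
Definition phi_hi (f1 : R) : R :=
  epsilon (inhabits 0) (fun p => 0 <= p /\ fpot p = f1).

Definition beta (f0 : R) : R :=
  / 2 * RInt_gen (fun phi => / sqrt (f0 - fpot phi))
          (at_right (phi_lo f0)) (at_left (phi_hi f0)).

Definition h_hi (f : R) : R :=
  epsilon (inhabits 0) (fun h => 1 < h /\ h - ln h = f).
Definition h_lo (f : R) : R :=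
  epsilon (inhabits 0) (fun h => 0 < h < 1 /\ h - ln h = f).

Definition J (f : R) : R :=
  / (h_hi f - 1) + / (1 - h_lo f) - sqrt (2 / (f - 1)).

(* V(f) = pi / 2^(1/2) + lambda (f-1)^(3/2), with (f-1)^(3/2) = (f-1) sqrt(f-1)
   for f >= 1. *)
Definition Vfun (lambda f : R) : R :=
  PI / sqrt 2 + lambda * ((f - 1) * sqrt (f - 1)).

Definition Wfun (lambda f : R) : R :=
  (Vfun lambda f) ^ 2 - ln (4 * (Vfun lambda f) ^ 2) - f.

(* Hypotheses (b) and (c) alone confine [f1] to [f1 - 1 <= 49/20]: with [V = V(f1)],
   [W'(f1) < 0] reads [3 lambda (f1 - 1)^(1/2) (V^2 - 1) < V], and together with
   [V - pi / 2^(1/2) = lambda (f1 - 1)^(3/2)] this contradicts [W(f1) > 0] for larger [f1].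

   For [f0 = 1 + e], the convex potential [f] lies above its tangents at the roots
   [phi_* < 0 < phi^*] and above its minimum [1], so
   [f0 - f(phi) <= min (a (phi - phi_* ), e, b (phi^* - phi))] with [a = 1 - exp phi_*] and
   [b = exp phi^* - 1].  Integrating gives [beta >= (t + 1/t + s + 1/s) / 2] with
   [t = a / e^(1/2)] and [s = b / e^(1/2)].  As [L |-> L^2 - log (4 L^2)] increases on
   [[1, oo)], it remains to show that this bound beats [1 + e] for [0 < e <= 49/20].
   Now [t^2] and [s^2] are the values at [phi_*] and [phi^*] of
   [p |-> (exp p - 1)^2 / (f(p) - 1)], which increases on both half-lines; so on each of
   twelve subintervals of [e], rational points at which [exp] is enclosed bound [t] and [s],
   and the resulting rational inequalities are checked by computation. *)

From Stdlib Require Import Reals Lra Psatz Classical ClassicalEpsilon QArith Qreals List.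
From Coquelicot Require Import Coquelicot.
Import ListNotations.
Open Scope R_scope.

Lemma exp_le_exp x y : x <= y -> exp x <= exp y.
Proof. intros [H | ->]; [left; apply exp_increasing | right]; auto. Qed.

Lemma exp_tangent_le u v : exp v * (1 + u - v) <= exp u.
Proof.
  replace u with (v + (u - v)) at 2 by ring. rewrite exp_plus.
  pose proof (exp_ineq1_le (u - v)). pose proof (exp_pos v). nra.
Qed.

Lemma ln_ge_1_minus_inv z : 0 < z -> 1 - / z <= ln z.
Proof.
  intros Hz. pose proof (exp_ineq1_le (ln (/ z))).
  rewrite exp_ln in H by (apply Rinv_0_lt_compat; lra). rewrite ln_Rinv in H by lra. lra.
Qed.

Lemma inv_sqrt_le_inv_sqrt u v : 0 < u -> u <= v -> / sqrt v <= / sqrt u.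
Proof. intros. apply Rinv_le_contravar; [apply sqrt_lt_R0 | apply sqrt_le_1_alt]; lra. Qed.

Lemma nondecreasing_of_derive_nonneg (f df : R -> R) a b : a <= b ->
  (forall x, a <= x <= b -> is_derive f x (df x)) ->
  (forall x, a <= x <= b -> 0 <= df x) -> f a <= f b.
Proof.
  intros Hab Hd Hpos.
  destruct (MVT_gen f a b df) as [c [Hc Heq]].
  - intros x Hx. rewrite Rmin_left, Rmax_right in Hx by lra. apply Hd; lra.
  - intros x Hx. rewrite Rmin_left, Rmax_right in Hx by lra.
    apply continuity_pt_filterlim, (ex_derive_continuous (V := R_NormedModule)).
    eexists; apply Hd; lra.
  - rewrite Rmin_left, Rmax_right in Hc by lra. pose proof (Hpos c Hc). nra.
Qed.

Lemma sinh_ge x : 0 <= x -> 2 * x <= exp x - exp (- x).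
Proof.
  intros Hx.
  assert (Hmono := nondecreasing_of_derive_nonneg (fun t => exp t - exp (- t) - 2 * t)
    (fun t => exp t + exp (- t) - 2) 0 x Hx).
  simpl in Hmono. rewrite Ropp_0, exp_0 in Hmono.
  enough (1 - 1 - 2 * 0 <= exp x - exp (- x) - 2 * x) by lra.
  apply Hmono.
  - intros t _. auto_derive; [auto | ring].
  - intros t _. rewrite exp_Ropp. pose proof (exp_pos t).
    replace (exp t + / exp t - 2) with ((exp t - 1) * (exp t - 1) / exp t) by (field; lra).
    apply Rdiv_le_0_compat; [apply Rle_0_sqr | lra].
Qed.

Definition recip_sum (u : R) : R := u + / u.

Lemma recip_sum_ge_2 u : 0 < u -> 2 <= recip_sum u.
Proof.
  intros Hu. unfold recip_sum.
  replace (u + / u) with (2 + (u - 1) * (u - 1) / u) by (field; lra).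
  pose proof (Rdiv_le_0_compat _ _ (Rle_0_sqr (u - 1)) Hu). unfold Rsqr in *. lra.
Qed.

Lemma recip_sum_le_of_le_1 u v : 0 < u <= v -> v <= 1 -> recip_sum v <= recip_sum u.
Proof.
  intros Huv Hv. unfold recip_sum.
  assert (u + / u - (v + / v) = (v - u) * (/ (u * v) - 1)) by (field; lra).
  enough (0 <= (v - u) * (/ (u * v) - 1)) by lra.
  apply Rmult_le_pos; [lra|].
  assert (1 <= / (u * v)) by (rewrite <- Rinv_1; apply Rinv_le_contravar; nra). lra.
Qed.

Lemma recip_sum_le_of_ge_1 u v : 1 <= u <= v -> recip_sum u <= recip_sum v.
Proof.
  intros Huv. unfold recip_sum.
  assert (v + / v - (u + / u) = (v - u) * (1 - / (u * v))) by (field; lra).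
  enough (0 <= (v - u) * (1 - / (u * v))) by lra.
  apply Rmult_le_pos; [lra|].
  assert (/ (u * v) <= 1) by (rewrite <- Rinv_1; apply Rinv_le_contravar; nra). lra.
Qed.

Lemma recip_sum_le_of_sqr_le_1 u v : 0 < u -> 0 < v <= 1 -> u ^ 2 <= v ^ 2 ->
  recip_sum v <= recip_sum u.
Proof. intros Hu Hv Huv. apply recip_sum_le_of_le_1; nra. Qed.

Lemma recip_sum_le_of_sqr_le u v : 1 <= u -> 0 < v -> u ^ 2 <= v ^ 2 ->
  recip_sum u <= recip_sum v.
Proof. intros Hu Hv Huv. apply recip_sum_le_of_ge_1; nra. Qed.

Definition sq_log (L : R) : R := L ^ 2 - ln (4 * L ^ 2).

Lemma sq_log_le L B : 1 <= L <= B -> sq_log L <= sq_log B.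
Proof.
  intros HLB. unfold sq_log.
  assert (Hln : ln (4 * B ^ 2) - ln (4 * L ^ 2) <= 2 * (B / L - 1)).
  { rewrite <- ln_div by nra.
    replace (4 * B ^ 2 / (4 * L ^ 2)) with ((B / L) ^ 2) by (field; lra).
    assert (0 < B / L) by (apply Rdiv_lt_0_compat; lra).
    rewrite ln_pow by lra. pose proof (exp_ineq1_le (ln (B / L))). rewrite exp_ln in * by lra.
    simpl INR. lra. }
  assert (2 * (B / L - 1) <= 2 * (B - L)).
  { apply Rmult_le_compat_l; [lra|]. apply Rmult_le_reg_r with L; [lra|].
    unfold Rdiv. rewrite Rmult_minus_distr_r, Rmult_assoc, Rinv_l by lra. nra. }
  nra.
Qed.

Lemma ex_RInt_inside (k : R -> R) lo hi x y :
  (forall z, lo < z < hi -> continuous k z) -> lo < x -> x <= y -> y < hi -> ex_RInt k x y.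
Proof.
  intros Hk Hx Hxy Hy. apply (ex_RInt_continuous (V := R_CompleteNormedModule)).
  intros z Hz. rewrite Rmin_left, Rmax_right in Hz by lra. apply Hk; lra.
Qed.

Lemma ball_R_iff (x y : R) (eps : posreal) : ball x eps y <-> x - eps < y < x + eps.
Proof.
  unfold ball; simpl; unfold AbsRing_ball, abs, minus, plus, opp; simpl.
  split; intros H; [apply Rabs_lt_between in H | apply Rabs_lt_between]; lra.
Qed.

Section ImproperIntegral.

Variables (k : R -> R) (lo hi c : R).
Hypothesis Hc : lo < c < hi.
Hypothesis k_cont : forall x, lo < x < hi -> continuous k x.
Hypothesis k_nonneg : forall x, lo < x < hi -> 0 <= k x.

Let ex_k x y : lo < x -> x <= y -> y < hi -> ex_RInt k x y :=
  ex_RInt_inside k lo hi x y k_cont.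

Lemma RInt_le_RInt_wider x0 y0 x y :
  lo < x <= x0 -> x0 <= y0 -> y0 <= y < hi -> RInt k x0 y0 <= RInt k x y.
Proof.
  intros Hx Hxy Hy.
  rewrite <- (RInt_Chasles k x x0 y), <- (RInt_Chasles k x0 y0 y) by (apply ex_k; lra).
  assert (0 <= RInt k x x0)
    by (apply RInt_ge_0; [lra | apply ex_k; lra | intros; apply k_nonneg; lra]).
  assert (0 <= RInt k y0 y)
    by (apply RInt_ge_0; [lra | apply ex_k; lra | intros; apply k_nonneg; lra]).
  unfold plus; simpl; lra.
Qed.

(* The improper integral is the supremum of the integrals over [x, y] with x <= c <= y. *)
Lemma is_RInt_gen_of_bounded M :
  (forall x y, lo < x <= c -> c <= y < hi -> RInt k x y <= M) ->
  exists S, is_RInt_gen k (at_right lo) (at_left hi) S /\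
    (forall x y, lo < x <= c -> c <= y < hi -> RInt k x y <= S).
Proof.
  intros HM.
  set (E := fun r => exists x y, lo < x <= c /\ c <= y < hi /\ r = RInt k x y).
  assert (HB : bound E) by (exists M; intros r [x [y [Hx [Hy ->]]]]; auto).
  assert (HE : exists r, E r) by (exists (RInt k c c), c, c; repeat split; lra).
  destruct (completeness E HB HE) as [S [HSup HSleast]].
  assert (Hup : forall x y, lo < x <= c -> c <= y < hi -> RInt k x y <= S)
    by (intros x y Hx Hy; apply HSup; exists x, y; auto).
  exists S; split; [|exact Hup].
  intros P [eps HP].
  assert (Hnear : exists x0 y0, lo < x0 <= c /\ c <= y0 < hi /\ S - eps < RInt k x0 y0).
  { apply NNPP; intro Hn.
    assert (S <= S - eps); [|pose proof (cond_pos eps); lra].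
    apply HSleast; intros r [x [y [Hx [Hy ->]]]].
    apply Rnot_lt_le; intro Hl; apply Hn; exists x, y; auto. }
  destruct Hnear as [x0 [y0 [Hx0 [Hy0 Hgt]]]].
  apply Filter_prod with (Q := fun x => lo < x <= x0) (R := fun y => y0 <= y < hi).
  - exists (mkposreal (x0 - lo) ltac:(lra)); intros x Hb Hlt.
    apply ball_R_iff in Hb; simpl in Hb; lra.
  - exists (mkposreal (hi - y0) ltac:(lra)); intros y Hb Hlt.
    apply ball_R_iff in Hb; simpl in Hb; lra.
  - intros x y Hx Hy; exists (RInt k x y); split.
    + apply (RInt_correct (V := R_CompleteNormedModule)), ex_k; lra.
    + apply HP, ball_R_iff.
      pose proof (Hup x y ltac:(lra) ltac:(lra)).
      pose proof (RInt_le_RInt_wider x0 y0 x y ltac:(lra) ltac:(lra) ltac:(lra)).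
      lra.
Qed.

End ImproperIntegral.

Lemma is_RInt_inv_sqrt_right_of c p x y : 0 < c -> p < x -> x <= y ->
  is_RInt (fun t => / sqrt (c * (t - p))) x y
    (2 * (sqrt (c * (y - p)) - sqrt (c * (x - p))) / c).
Proof.
  intros Hc Hx Hxy.
  replace (2 * (sqrt (c * (y - p)) - sqrt (c * (x - p))) / c) with
    (minus (2 * sqrt (c * (y - p)) / c) (2 * sqrt (c * (x - p)) / c))
    by (unfold minus, plus, opp; simpl; field; lra).
  apply (is_RInt_derive (V := R_CompleteNormedModule) (fun t => 2 * sqrt (c * (t - p)) / c));
    intros t Ht; rewrite Rmin_left, Rmax_right in Ht by lra;
    assert (0 < c * (t - p)) by nra;
    assert (sqrt (c * (t - p)) <> 0) by (apply Rgt_not_eq, sqrt_lt_R0; lra).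
  - auto_derive; [lra|]. replace (t + - p) with (t - p) by ring. field; lra.
  - apply (ex_derive_continuous (V := R_NormedModule)).
    auto_derive; replace (t + - p) with (t - p) by ring; repeat split; lra.
Qed.

Lemma is_RInt_inv_sqrt_left_of c q x y : 0 < c -> x <= y -> y < q ->
  is_RInt (fun t => / sqrt (c * (q - t))) x y
    (2 * (sqrt (c * (q - x)) - sqrt (c * (q - y))) / c).
Proof.
  intros Hc Hxy Hy.
  replace (2 * (sqrt (c * (q - x)) - sqrt (c * (q - y))) / c) with
    (minus (- (2 * sqrt (c * (q - y)) / c)) (- (2 * sqrt (c * (q - x)) / c)))
    by (unfold minus, plus, opp; simpl; field; lra).
  apply (is_RInt_derive (V := R_CompleteNormedModule) (fun t => - (2 * sqrt (c * (q - t)) / c)));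
    intros t Ht; rewrite Rmin_left, Rmax_right in Ht by lra;
    assert (0 < c * (q - t)) by nra;
    assert (sqrt (c * (q - t)) <> 0) by (apply Rgt_not_eq, sqrt_lt_R0; lra).
  - auto_derive; [lra|]. replace (q + - t) with (q - t) by ring. field; lra.
  - apply (ex_derive_continuous (V := R_NormedModule)).
    auto_derive; replace (q + - t) with (q - t) by ring; repeat split; lra.
Qed.

(** * The potential [fpot] and its roots *)

Lemma fpot_0 : fpot 0 = 1.
Proof. unfold fpot. rewrite exp_0. ring. Qed.

Lemma fpot_ge_1 p : 1 <= fpot p.
Proof. unfold fpot. pose proof (exp_ineq1_le p). lra. Qed.

Lemma fpot_decreasing_neg p q : p < q <= 0 -> fpot q < fpot p.
Proof.
  intros Hpq. unfold fpot.
  assert (exp p = exp q * exp (p - q)) by (rewrite <- exp_plus; f_equal; ring).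
  pose proof (exp_ineq1 (p - q) ltac:(lra)). pose proof (exp_pos q).
  assert (exp q <= 1) by (rewrite <- exp_0; apply exp_le_exp; lra).
  nra.
Qed.

Lemma fpot_increasing_pos p q : 0 <= p < q -> fpot p < fpot q.
Proof.
  intros Hpq. unfold fpot.
  assert (exp q = exp p * exp (q - p)) by (rewrite <- exp_plus; f_equal; ring).
  pose proof (exp_ineq1 (q - p) ltac:(lra)).
  assert (1 <= exp p) by (rewrite <- exp_0; apply exp_le_exp; lra).
  nra.
Qed.

Lemma fpot_gt_1 p : p <> 0 -> 1 < fpot p.
Proof.
  intros Hp. rewrite <- fpot_0. destruct (Rle_or_lt p 0).
  - apply fpot_decreasing_neg; lra.
  - apply fpot_increasing_pos; lra.
Qed.

Lemma fpot_continuous : continuity fpot.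
Proof.
  apply continuity_minus; apply derivable_continuous; [apply derivable_exp | apply derivable_id].
Qed.

Lemma phi_lo_spec f0 : 1 < f0 -> phi_lo f0 < 0 /\ fpot (phi_lo f0) = f0.
Proof.
  intros Hf0.
  assert (Hroot : exists p, p <= 0 /\ fpot p = f0).
  { destruct (IVT_gen fpot (- f0) 0 f0 fpot_continuous) as [p [Hp Hfp]].
    - rewrite fpot_0. unfold fpot. pose proof (exp_pos (- f0)).
      rewrite Rmin_right, Rmax_left by lra. lra.
    - rewrite Rmax_right in Hp by lra. exists p; split; [lra | exact Hfp]. }
  destruct (epsilon_spec (inhabits 0) _ Hroot) as [Hle Heq]. fold (phi_lo f0) in Hle, Heq.
  split; [|exact Heq].
  destruct Hle as [|Hz]; [assumption|]. rewrite Hz, fpot_0 in Heq. lra.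
Qed.

Lemma phi_hi_spec f0 : 1 < f0 -> 0 < phi_hi f0 /\ fpot (phi_hi f0) = f0.
Proof.
  intros Hf0.
  assert (Hroot : exists p, 0 <= p /\ fpot p = f0).
  { destruct (IVT_gen fpot 0 f0 f0 fpot_continuous) as [p [Hp Hfp]].
    - rewrite fpot_0. unfold fpot. pose proof (exp_ge_taylor f0 2 ltac:(lra)) as Ht.
      simpl in Ht. rewrite Rmin_left, Rmax_right by nra. nra.
    - rewrite Rmin_left in Hp by lra. exists p; split; [lra | exact Hfp]. }
  destruct (epsilon_spec (inhabits 0) _ Hroot) as [Hle Heq]. fold (phi_hi f0) in Hle, Heq.
  split; [|exact Heq].
  destruct Hle as [|Hz]; [assumption|]. rewrite <- Hz, fpot_0 in Heq. lra.
Qed.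

Definition slope_ratio (p : R) : R := (exp p - 1) ^ 2 / (fpot p - 1).

(* The derivative is [(exp p - 1) (exp p - exp (- p) - 2 p) exp p / (fpot p - 1)^2], and both
   factors in front have the sign of [p]. *)
Lemma slope_ratio_le p q : p <= q -> (q < 0 \/ 0 < p) -> slope_ratio p <= slope_ratio q.
Proof.
  intros Hpq Hside.
  assert (Hx : forall x, p <= x <= q -> 0 < fpot x - 1)
    by (intros x Hx; pose proof (fpot_gt_1 x ltac:(lra)); lra).
  apply (nondecreasing_of_derive_nonneg slope_ratio
    (fun x => (exp x - 1) * (exp x - exp (- x) - 2 * x) * exp x / (fpot x - 1) ^ 2) p q Hpq).
  - intros x Hpx. pose proof (Hx x Hpx). pose proof (exp_pos x).
    unfold slope_ratio, fpot in *. auto_derive; [lra|].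
    rewrite exp_Ropp. field. lra.
  - intros x Hpx. pose proof (Hx x Hpx). pose proof (exp_pos x).
    apply Rdiv_le_0_compat; [|apply pow_lt; lra].
    apply Rmult_le_pos; [|lra].
    destruct (Rle_or_lt 0 x) as [Hx0 | Hx0].
    + pose proof (sinh_ge x Hx0). pose proof (exp_le_exp 0 x Hx0). rewrite exp_0 in *.
      apply Rmult_le_pos; lra.
    + pose proof (sinh_ge (- x) ltac:(lra)). pose proof (exp_increasing x 0 Hx0).
      rewrite Ropp_involutive, exp_0 in *. nra.
Qed.

Lemma slope_ratio_ge_2 p : 0 < p -> 2 <= slope_ratio p.
Proof.
  intros Hp. pose proof (fpot_gt_1 p ltac:(lra)).
  assert (Hmono := nondecreasing_of_derive_nonneg (fun x => (exp x - 1) ^ 2 - 2 * (fpot x - 1))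
    (fun x => 2 * (exp x - 1) ^ 2) 0 p ltac:(lra)).
  simpl in Hmono. unfold fpot in *. rewrite exp_0 in Hmono.
  unfold slope_ratio, fpot. apply Rmult_le_reg_r with (exp p - p - 1); [lra|].
  unfold Rdiv. rewrite Rmult_assoc, Rinv_l, Rmult_1_r by lra.
  enough ((1 - 1) ^ 2 - 2 * (1 - 0 - 1) <= (exp p - 1) ^ 2 - 2 * (exp p - p - 1)) by lra.
  apply Hmono.
  - intros t _. auto_derive; [auto | ring].
  - intros t _. apply Rmult_le_pos; [lra | apply pow2_ge_0].
Qed.

Lemma slope_ratio_eq_sqr e p : fpot p = 1 + e -> 0 < e ->
  ((exp p - 1) / sqrt e) ^ 2 = slope_ratio p.
Proof.
  intros Hp He. unfold slope_ratio. rewrite Hp. replace (1 + e - 1) with e by ring.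
  unfold Rdiv. rewrite Rpow_mult_distr, pow_inv, pow2_sqrt by lra. reflexivity.
Qed.

(** * A lower bound for [beta] *)

(* Half the integral of [/ sqrt (min (a (phi - lo), f0 - 1, b (hi - phi)))] over [lo, hi],
   where [a = 1 - exp lo] and [b = exp hi - 1]. *)
Definition beta_lower (f0 lo hi : R) : R :=
  (recip_sum ((1 - exp lo) / sqrt (f0 - 1)) + recip_sum ((exp hi - 1) / sqrt (f0 - 1))) / 2.

Section BetaLowerBound.

Variables f0 lo hi : R.
Hypothesis Hlo : lo < 0.
Hypothesis Hhi : 0 < hi.
Hypothesis Elo : fpot lo = f0.
Hypothesis Ehi : fpot hi = f0.

Let e := f0 - 1.
Let a := 1 - exp lo.
Let b := exp hi - 1.
Let k := fun phi => / sqrt (f0 - fpot phi).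

Lemma e_pos : 0 < e.
Proof. pose proof (fpot_decreasing_neg lo 0 ltac:(lra)). rewrite fpot_0 in H. unfold e; lra. Qed.

Lemma a_pos : 0 < a.
Proof. pose proof (exp_increasing lo 0 Hlo). rewrite exp_0 in H. unfold a; lra. Qed.

Lemma b_pos : 0 < b.
Proof. pose proof (exp_increasing 0 hi Hhi). rewrite exp_0 in H. unfold b; lra. Qed.

Lemma roots_distance : hi - lo = a + b.
Proof. unfold fpot in Elo, Ehi. unfold a, b. lra. Qed.

(* [fpot] is convex, so it lies below its chords over [lo, 0] and [0, hi] ... *)
Lemma gap_ge_chord_left phi : lo <= phi <= 0 -> e * (phi - lo) / (- lo) <= f0 - fpot phi.
Proof.
  intros Hphi. unfold fpot, e. rewrite <- Elo. unfold fpot.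
  pose proof (exp_tangent_le lo phi). pose proof (exp_tangent_le 0 phi). rewrite exp_0 in *.
  pose proof (exp_pos phi).
  apply Rmult_le_reg_r with (- lo); [lra|].
  unfold Rdiv. rewrite Rmult_assoc, Rinv_l by lra. nra.
Qed.

Lemma gap_ge_chord_right phi : 0 <= phi <= hi -> e * (hi - phi) / hi <= f0 - fpot phi.
Proof.
  intros Hphi. unfold fpot, e. rewrite <- Ehi. unfold fpot.
  pose proof (exp_tangent_le hi phi). pose proof (exp_tangent_le 0 phi). rewrite exp_0 in *.
  pose proof (exp_pos phi).
  apply Rmult_le_reg_r with hi; [lra|].
  unfold Rdiv. rewrite Rmult_assoc, Rinv_l by lra. nra.
Qed.

(* ... and above its tangents at [lo] and [hi]. *)
Lemma gap_le_tangent_left phi : f0 - fpot phi <= a * (phi - lo).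
Proof. rewrite <- Elo. unfold fpot, a. pose proof (exp_tangent_le phi lo). nra. Qed.

Lemma gap_le_tangent_right phi : f0 - fpot phi <= b * (hi - phi).
Proof. rewrite <- Ehi. unfold fpot, b. pose proof (exp_tangent_le phi hi). nra. Qed.

Lemma gap_le_e phi : f0 - fpot phi <= e.
Proof. pose proof (fpot_ge_1 phi). unfold e; lra. Qed.

Lemma gap_pos phi : lo < phi < hi -> 0 < f0 - fpot phi.
Proof.
  intros Hphi. pose proof e_pos.
  destruct (Rle_or_lt phi 0).
  - eapply Rlt_le_trans; [|apply gap_ge_chord_left; lra]. apply Rdiv_lt_0_compat; nra.
  - eapply Rlt_le_trans; [|apply gap_ge_chord_right; lra]. apply Rdiv_lt_0_compat; nra.
Qed.

Lemma k_continuous phi : lo < phi < hi -> continuous k phi.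
Proof.
  intros Hphi. pose proof (gap_pos phi Hphi). unfold k, fpot in *.
  apply (ex_derive_continuous (V := R_NormedModule)).
  auto_derive. repeat split; try lra. apply Rgt_not_eq, sqrt_lt_R0; lra.
Qed.

Lemma k_nonneg phi : lo < phi < hi -> 0 <= k phi.
Proof.
  intros Hphi. pose proof (gap_pos phi Hphi).
  left. apply Rinv_0_lt_compat, sqrt_lt_R0; lra.
Qed.

Let ex_k x y : lo < x -> x <= y -> y < hi -> ex_RInt k x y :=
  ex_RInt_inside k lo hi x y k_continuous.

Lemma RInt_k_bounded : exists M, forall x y, lo < x <= 0 -> 0 <= y < hi -> RInt k x y <= M.
Proof.
  pose proof e_pos as He.
  set (cl := e / (- lo)). set (ch := e / hi).
  assert (Hcl : 0 < cl) by (apply Rdiv_lt_0_compat; lra).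
  assert (Hch : 0 < ch) by (apply Rdiv_lt_0_compat; lra).
  exists (2 * sqrt (cl * (0 - lo)) / cl + 2 * sqrt (ch * (hi - 0)) / ch).
  intros x y Hx Hy.
  rewrite <- (RInt_Chasles k x 0 y) by (apply ex_k; lra).
  apply Rplus_le_compat.
  - pose proof (is_RInt_inv_sqrt_right_of cl lo x 0 Hcl (proj1 Hx) (proj2 Hx)) as HI.
    apply Rle_trans with (RInt (fun t => / sqrt (cl * (t - lo))) x 0).
    + apply RInt_le; [lra | apply ex_k; lra | eexists; exact HI |].
      intros t Ht. apply inv_sqrt_le_inv_sqrt; [apply Rmult_lt_0_compat; lra|].
      replace (cl * (t - lo)) with (e * (t - lo) / (- lo)) by (unfold cl; field; lra).
      apply gap_ge_chord_left; lra.
    + rewrite (is_RInt_unique _ _ _ _ HI). pose proof (sqrt_pos (cl * (x - lo))).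
      unfold Rdiv. apply Rmult_le_compat_r; [left; apply Rinv_0_lt_compat|]; lra.
  - pose proof (is_RInt_inv_sqrt_left_of ch hi 0 y Hch (proj1 Hy) (proj2 Hy)) as HI.
    apply Rle_trans with (RInt (fun t => / sqrt (ch * (hi - t))) 0 y).
    + apply RInt_le; [lra | apply ex_k; lra | eexists; exact HI |].
      intros t Ht. apply inv_sqrt_le_inv_sqrt; [apply Rmult_lt_0_compat; lra|].
      replace (ch * (hi - t)) with (e * (hi - t) / hi) by (unfold ch; field; lra).
      apply gap_ge_chord_right; lra.
    + rewrite (is_RInt_unique _ _ _ _ HI). pose proof (sqrt_pos (ch * (hi - y))).
      unfold Rdiv. apply Rmult_le_compat_r; [left; apply Rinv_0_lt_compat|]; lra.
Qed.

Lemma left_knot_le : e / a <= - lo.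
Proof.
  pose proof a_pos. pose proof (exp_tangent_le 0 lo). rewrite exp_0 in H0.
  apply Rmult_le_reg_r with a; [lra|]. unfold Rdiv. rewrite Rmult_assoc, Rinv_l by lra.
  unfold e, a. rewrite <- Elo. unfold fpot. nra.
Qed.

Lemma right_knot_le : e / b <= hi.
Proof.
  pose proof b_pos. pose proof (exp_tangent_le 0 hi). rewrite exp_0 in H0.
  apply Rmult_le_reg_r with b; [lra|]. unfold Rdiv. rewrite Rmult_assoc, Rinv_l by lra.
  unfold e, b. rewrite <- Ehi. unfold fpot. nra.
Qed.

(* Near each root the tangent bound is the better one, in the middle the bound [e]; the
   switch points are [lo + e / a] and [hi - e / b]. *)
Lemma RInt_k_ge x y : lo < x <= lo + e / a -> hi - e / b <= y < hi ->
  2 * beta_lower f0 lo hi - 2 * sqrt (a * (x - lo)) / a - 2 * sqrt (b * (hi - y)) / b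
    <= RInt k x y.
Proof.
  intros Hx Hy. pose proof e_pos. pose proof a_pos. pose proof b_pos.
  pose proof left_knot_le. pose proof right_knot_le.
  assert (0 <= e / a) by (apply Rdiv_le_0_compat; lra).
  assert (0 <= e / b) by (apply Rdiv_le_0_compat; lra).
  remember (lo + e / a) as x1 eqn:Ex1. remember (hi - e / b) as x2 eqn:Ex2.
  rewrite <- (RInt_Chasles k x x1 y), <- (RInt_Chasles k x1 x2 y) by (apply ex_k; lra).
  assert (Hleft : 2 * (sqrt (a * (x1 - lo)) - sqrt (a * (x - lo))) / a <= RInt k x x1).
  { pose proof (is_RInt_inv_sqrt_right_of a lo x x1 a_pos (proj1 Hx) (proj2 Hx)) as HI.
    rewrite <- (is_RInt_unique _ _ _ _ HI).
    apply RInt_le; [lra | eexists; exact HI | apply ex_k; lra |].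
    intros t Ht. apply inv_sqrt_le_inv_sqrt; [apply gap_pos; lra | apply gap_le_tangent_left]. }
  assert (Hright : 2 * (sqrt (b * (hi - x2)) - sqrt (b * (hi - y))) / b <= RInt k x2 y).
  { pose proof (is_RInt_inv_sqrt_left_of b hi x2 y b_pos (proj1 Hy) (proj2 Hy)) as HI.
    rewrite <- (is_RInt_unique _ _ _ _ HI).
    apply RInt_le; [lra | eexists; exact HI | apply ex_k; lra |].
    intros t Ht. apply inv_sqrt_le_inv_sqrt; [apply gap_pos; lra | apply gap_le_tangent_right]. }
  assert (Hmid : (x2 - x1) * / sqrt e <= RInt k x1 x2).
  { replace ((x2 - x1) * / sqrt e) with (RInt (fun _ => / sqrt e) x1 x2)
      by (rewrite RInt_const; reflexivity).
    apply RInt_le; [lra | apply ex_RInt_const | apply ex_k; lra |].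
    intros t Ht. apply inv_sqrt_le_inv_sqrt; [apply gap_pos; lra | apply gap_le_e]. }
  replace (a * (x1 - lo)) with e in Hleft by (rewrite Ex1; field; lra).
  replace (b * (hi - x2)) with e in Hright by (rewrite Ex2; field; lra).
  assert (Hse : sqrt e * sqrt e = e) by (apply sqrt_sqrt; lra).
  assert (0 < sqrt e) by (apply sqrt_lt_R0; lra).
  assert (Hsplit : 2 * beta_lower f0 lo hi =
    2 * sqrt e / a + (x2 - x1) * / sqrt e + 2 * sqrt e / b).
  { unfold beta_lower, recip_sum. fold e a b. rewrite Ex1, Ex2.
    replace hi with (lo + a + b) by (pose proof roots_distance; lra).
    set (s := sqrt e) in *. replace e with (s * s) by exact Hse. field. lra. }
  unfold plus; simpl. lra.
Qed.

Lemma two_sqrt_div_le_quarter c eta d : 0 < c -> 0 <= d -> 0 <= eta <= c * (d * d) / 64 ->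
  2 * sqrt (c * eta) / c <= d / 4.
Proof.
  intros Hc Hd Heta.
  assert (sqrt (c * eta) <= c * d / 8).
  { rewrite <- (sqrt_pow2 (c * d / 8)) by nra. apply sqrt_le_1_alt. nra. }
  apply Rmult_le_reg_r with c; [lra|]. unfold Rdiv. rewrite Rmult_assoc, Rinv_l by lra. nra.
Qed.

(* Let [x -> lo] and [y -> hi] in [RInt_k_ge]. *)
Lemma beta_integral_ge : exists S,
  is_RInt_gen k (at_right lo) (at_left hi) S /\ 2 * beta_lower f0 lo hi <= S.
Proof.
  destruct RInt_k_bounded as [M HM].
  destruct (is_RInt_gen_of_bounded k lo hi 0 ltac:(lra) k_continuous k_nonneg M HM)
    as [S [HS Hup]].
  exists S. split; [exact HS|].
  pose proof e_pos. pose proof a_pos. pose proof b_pos.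
  pose proof left_knot_le. pose proof right_knot_le.
  apply Rnot_lt_le. intro Hlt. set (d := 2 * beta_lower f0 lo hi - S).
  assert (0 < d) by (unfold d; lra).
  set (eta := Rmin (Rmin (e / a) (e / b)) (Rmin (a * (d * d) / 64) (b * (d * d) / 64))).
  assert (0 < eta).
  { unfold eta. repeat apply Rmin_pos; apply Rdiv_lt_0_compat; try apply Rmult_lt_0_compat; nra. }
  assert (eta <= e / a) by (unfold eta; eapply Rle_trans; [apply Rmin_l | apply Rmin_l]).
  assert (eta <= e / b) by (unfold eta; eapply Rle_trans; [apply Rmin_l | apply Rmin_r]).
  assert (eta <= a * (d * d) / 64) by (unfold eta; eapply Rle_trans; [apply Rmin_r | apply Rmin_l]).
  assert (eta <= b * (d * d) / 64) by (unfold eta; eapply Rle_trans; [apply Rmin_r | apply Rmin_r]).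
  pose proof (RInt_k_ge (lo + eta) (hi - eta) ltac:(lra) ltac:(lra)) as Hlow.
  pose proof (Hup (lo + eta) (hi - eta) ltac:(lra) ltac:(lra)).
  replace (lo + eta - lo) with eta in Hlow by ring.
  replace (hi - (hi - eta)) with eta in Hlow by ring.
  pose proof (two_sqrt_div_le_quarter a eta d ltac:(lra) ltac:(lra) ltac:(lra)).
  pose proof (two_sqrt_div_le_quarter b eta d ltac:(lra) ltac:(lra) ltac:(lra)).
  unfold d in *. lra.
Qed.

End BetaLowerBound.

Lemma beta_lower_le_beta f0 : 1 < f0 -> beta_lower f0 (phi_lo f0) (phi_hi f0) <= beta f0.
Proof.
  intros Hf0.
  destruct (phi_lo_spec f0 Hf0) as [Hlo Elo]. destruct (phi_hi_spec f0 Hf0) as [Hhi Ehi].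
  destruct (beta_integral_ge f0 _ _ Hlo Hhi Elo Ehi) as [S [HS HF]].
  unfold beta. rewrite (is_RInt_gen_unique _ S HS). lra.
Qed.

(** * Certified rational enclosures of [exp] *)

Definition taylor_exp (n : nat) (x : R) : R :=
  sum_f_R0 (fun k => x ^ k / INR (Factorial.fact k)) n.

Lemma exp_le_taylor_div n x : 0 < x -> x ^ S n / INR (Factorial.fact (S n)) < 1 ->
  exp x <= taylor_exp n x / (1 - x ^ S n / INR (Factorial.fact (S n))).
Proof.
  intros Hx Hterm.
  assert (Hd : forall t, 0 <= t <= x -> forall k, (k <= S n)%nat -> ex_derive_n exp k t).
  { intros t _ k _. destruct k; [exact I|]. exists (exp t). apply (is_derive_n_exp (S k)). }
  destruct (Taylor_Lagrange exp n 0 x Hx Hd) as [z [Hz Heq]].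
  assert (Dn : forall m y, Derive_n exp m y = exp y)
    by (intros; apply is_derive_n_unique, is_derive_n_exp).
  assert (Hsum : taylor_exp n x =
    sum_f_R0 (fun m => (x - 0) ^ m / INR (Factorial.fact m) * Derive_n exp m 0) n).
  { apply sum_eq. intros i _. rewrite Dn, exp_0, Rminus_0_r. ring. }
  rewrite <- Hsum, Dn, Rminus_0_r in Heq.
  pose proof (exp_le_exp z x ltac:(lra)).
  assert (0 <= x ^ S n / INR (Factorial.fact (S n)))
    by (apply Rdiv_le_0_compat; [apply pow_le | apply INR_fact_lt_0]; lra).
  apply Rmult_le_reg_r with (1 - x ^ S n / INR (Factorial.fact (S n))); [lra|].
  unfold Rdiv at 2. rewrite Rmult_assoc, Rinv_l, Rmult_1_r by lra. nra.
Qed.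

Local Open Scope Q_scope.

(* Horner form of the Taylor polynomial.  Fractions are deliberately left unreduced: [Qred]
   would dominate the cost of checking the certificates by kernel reduction. *)
Fixpoint exp_horner_Q (q : Q) (m k : nat) : Q :=
  match m with
  | O => 1
  | S m' => 1 + q / inject_Z (Z.of_nat k) * exp_horner_Q q m' (S k)
  end.

Fixpoint exp_term_Q (q : Q) (n : nat) : Q :=
  match n with
  | O => 1
  | S m => exp_term_Q q m * q / inject_Z (Z.of_nat n)
  end.

Definition Qfloor_to (d : positive) (q : Q) : Q := (Qnum q * Zpos d / Zpos (Qden q))%Z # d.

Definition Qceil_to (d : positive) (q : Q) : Q := (- (- Qnum q * Zpos d / Zpos (Qden q)))%Z # d.

Definition Qltb (a b : Q) : bool := negb (Qle_bool b a).

(* An enclosure [L <= exp q <= U] with denominators [d], from the Taylor polynomial of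
   degree [n] and its Lagrange remainder. *)
Definition exp_enclosure (n : nat) (d : positive) (q : Q) : option (Q * Q) :=
  let s := exp_horner_Q q n 1 in
  let t := exp_term_Q q (S n) in
  let L := Qfloor_to d s in
  if Qltb 0 q && Qltb t 1 && Qle_bool 1 L then Some (L, Qceil_to d (s / (1 - t))) else None.

Definition exp_bounds : Q -> option (Q * Q) := exp_enclosure 22 (10 ^ 12).

Local Close Scope Q_scope.

Lemma Q2R_int (z : Z) : Q2R (z # 1) = IZR z.
Proof. unfold Q2R; simpl. field. Qed.

Lemma Q2R_inject_nat n : Q2R (inject_Z (Z.of_nat n)) = INR n.
Proof. unfold inject_Z. rewrite Q2R_int, INR_IZR_INZ. reflexivity. Qed.

Lemma Q2R_div_nat q n : n <> 0%nat -> Q2R (q / inject_Z (Z.of_nat n)) = Q2R q / INR n.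
Proof.
  intros Hn. rewrite Q2R_div, Q2R_inject_nat; [reflexivity|].
  intros H. apply Qeq_eqR in H. rewrite Q2R_inject_nat, RMicromega.Q2R_0 in H.
  exact (not_0_INR n Hn H).
Qed.

Lemma Qltb_Rlt a b : Qltb a b = true -> Q2R a < Q2R b.
Proof.
  unfold Qltb. intros H. apply Qlt_Rlt, Qnot_le_lt. intros Hle.
  apply Qle_bool_iff in Hle. rewrite Hle in H. discriminate.
Qed.

Lemma Q2R_exp_term_Q q n : Q2R (exp_term_Q q n) = Q2R q ^ n / INR (Factorial.fact n).
Proof.
  induction n as [|n IH]; cbn [exp_term_Q].
  - rewrite RMicromega.Q2R_1. simpl. field.
  - rewrite Q2R_div_nat, Q2R_mult, IH by lia. rewrite fact_simpl, mult_INR. simpl pow.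
    field. split; [apply INR_fact_neq_0 | apply not_0_INR; lia].
Qed.

Lemma Q2R_exp_horner_Q q m j : Q2R (exp_horner_Q q m (S j)) =
  sum_f_R0 (fun i => Q2R q ^ i * INR (Factorial.fact j) / INR (Factorial.fact (j + i))) m.
Proof.
  revert j. induction m as [|m IH]; intros j; cbn [exp_horner_Q].
  - rewrite RMicromega.Q2R_1. simpl. rewrite Nat.add_0_r. field. apply INR_fact_neq_0.
  - rewrite Q2R_plus, RMicromega.Q2R_1, Q2R_mult, Q2R_div_nat, IH by lia.
    rewrite (decomp_sum _ (S m)) by lia. simpl pred. rewrite Nat.add_0_r.
    f_equal; [simpl; field; apply INR_fact_neq_0|].
    rewrite scal_sum. apply sum_eq. intros i _.
    replace (j + S i)%nat with (S j + i)%nat by lia. rewrite (fact_simpl j), mult_INR.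
    simpl pow. field. split; [apply INR_fact_neq_0 | apply not_0_INR; lia].
Qed.

Lemma Q2R_exp_horner_Q_taylor q n : Q2R (exp_horner_Q q n 1) = taylor_exp n (Q2R q).
Proof.
  rewrite Q2R_exp_horner_Q. apply sum_eq. intros i _. simpl. field. apply INR_fact_neq_0.
Qed.

Lemma Qfloor_to_le d q : Q2R (Qfloor_to d q) <= Q2R q.
Proof.
  apply Qle_Rle. unfold Qfloor_to, Qle. simpl.
  pose proof (Z.mul_div_le (Qnum q * Zpos d) (Zpos (Qden q)) ltac:(lia)). lia.
Qed.

Lemma Qceil_to_ge d q : Q2R q <= Q2R (Qceil_to d q).
Proof.
  apply Qle_Rle. unfold Qceil_to, Qle. simpl.
  pose proof (Z.mul_div_le (- Qnum q * Zpos d) (Zpos (Qden q)) ltac:(lia)). lia.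
Qed.

Lemma exp_enclosure_spec n d q L U : exp_enclosure n d q = Some (L, U) ->
  0 < Q2R q /\ 1 <= Q2R L /\ Q2R L <= exp (Q2R q) <= Q2R U.
Proof.
  unfold exp_enclosure. cbv zeta.
  pose proof (Q2R_exp_horner_Q_taylor q n) as Hs. pose proof (Q2R_exp_term_Q q (S n)) as Ht.
  set (s := exp_horner_Q q n 1) in *. set (t := exp_term_Q q (S n)) in *.
  destruct (Qltb 0 q) eqn:Hq; [|discriminate]. destruct (Qltb t 1) eqn:Hterm; [|discriminate].
  destruct (Qle_bool 1 _) eqn:HL; [|discriminate].
  intros [= <- <-].
  apply Qltb_Rlt in Hq, Hterm. apply RMicromega.Qle_true in HL.
  rewrite RMicromega.Q2R_0 in Hq. rewrite RMicromega.Q2R_1 in Hterm, HL. rewrite Ht in Hterm.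
  pose proof (Qfloor_to_le d s) as Hfl. pose proof (Qceil_to_ge d (s / (1 - t))) as Hce.
  rewrite Q2R_div, Q2R_minus, RMicromega.Q2R_1, Ht, Hs in Hce.
  - pose proof (exp_ge_taylor (Q2R q) n ltac:(lra)).
    pose proof (exp_le_taylor_div n (Q2R q) Hq Hterm).
    unfold taylor_exp in *. rewrite Hs in Hfl. repeat split; lra.
  - intros Hz. apply Qeq_eqR in Hz.
    rewrite Q2R_minus, RMicromega.Q2R_1, RMicromega.Q2R_0, Ht in Hz. lra.
Qed.

Lemma exp_le_of_enclosure n d q r :
  match exp_enclosure n d q with Some (_, U) => Qle_bool U r | None => false end = true ->
  exp (Q2R q) <= Q2R r.
Proof.
  destruct (exp_enclosure n d q) as [[L U]|] eqn:Hexp; [|discriminate].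
  intros HU. apply RMicromega.Qle_true in HU. apply exp_enclosure_spec in Hexp. lra.
Qed.

(** * The lower bound for [beta] beats [1 + e] for [e <= 49/20] *)

Definition beta_claim (e : R) : Prop :=
  forall lo hi beta0, lo < 0 -> 0 < hi -> fpot lo = 1 + e -> fpot hi = 1 + e ->
    beta_lower (1 + e) lo hi <= beta0 -> sq_log beta0 - (1 + e) > 0.

Lemma fpot_neg_knot_le e xk L : 0 < L <= exp xk -> 1 <= (e + 1 - xk) * L ->
  fpot (- xk) <= 1 + e.
Proof.
  intros HL Hknot. unfold fpot. rewrite exp_Ropp.
  assert (/ exp xk <= / L) by (apply Rinv_le_contravar; lra).
  assert (/ L <= e + 1 - xk).
  { apply Rmult_le_reg_r with L; [lra|]. rewrite Rinv_l by lra. lra. }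
  lra.
Qed.

Lemma slope_ratio_neg_knot_le xk tau U : 0 < xk -> exp xk <= U ->
  (U - 1) ^ 2 <= tau ^ 2 * (U + (xk - 1) * U ^ 2) -> slope_ratio (- xk) <= tau ^ 2.
Proof.
  intros Hxk HU Hcert.
  assert (Hw : 1 <= exp xk) by (rewrite <- exp_0; apply exp_le_exp; lra).
  pose proof (fpot_gt_1 (- xk) ltac:(lra)) as Hd.
  unfold slope_ratio, fpot in *. rewrite exp_Ropp in *.
  set (r := / exp xk) in *.
  assert (Hr : / U <= r <= 1).
  { unfold r. split; [apply Rinv_le_contravar; lra|].
    rewrite <- Rinv_1. apply Rinv_le_contravar; lra. }
  assert (HU' : (1 - / U) ^ 2 <= tau ^ 2 * (/ U + xk - 1)).
  { replace ((1 - / U) ^ 2) with ((U - 1) ^ 2 * / U ^ 2) by (field; lra).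
    replace (tau ^ 2 * (/ U + xk - 1)) with (tau ^ 2 * (U + (xk - 1) * U ^ 2) * / U ^ 2)
      by (field; lra).
    apply Rmult_le_compat_r; [apply Rlt_le, Rinv_0_lt_compat, pow_lt|]; lra. }
  apply Rmult_le_reg_r with (r - - xk - 1); [lra|].
  unfold Rdiv. rewrite Rmult_assoc, Rinv_l, Rmult_1_r by lra.
  assert (0 <= 1 - r <= 1 - / U) by lra.
  assert (tau ^ 2 * (/ U + xk - 1) <= tau ^ 2 * (r + xk - 1))
    by (apply Rmult_le_compat_l; [apply pow2_ge_0 | lra]).
  nra.
Qed.

(* The knot [- xk] lies in [[lo, 0)], so
   [t ^ 2 = slope_ratio lo <= slope_ratio (- xk) <= tau ^ 2]. *)
Lemma recip_sum_left_bound e lo xk tau L U :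
  lo < 0 -> fpot lo = 1 + e -> 0 < xk -> 0 < tau <= 1 -> 0 < L -> L <= exp xk <= U ->
  1 <= (e + 1 - xk) * L -> (U - 1) ^ 2 <= tau ^ 2 * (U + (xk - 1) * U ^ 2) ->
  recip_sum tau <= recip_sum ((1 - exp lo) / sqrt e).
Proof.
  intros Hlo Elo Hxk Htau HL HLU Hknot Hcert.
  pose proof (fpot_gt_1 lo ltac:(lra)) as He. rewrite Elo in He.
  pose proof (fpot_neg_knot_le e xk L ltac:(lra) Hknot) as Hfk.
  assert (Hlo_le : lo <= - xk).
  { apply Rnot_lt_le. intro Hlt. pose proof (fpot_decreasing_neg (- xk) lo ltac:(lra)). lra. }
  pose proof (slope_ratio_neg_knot_le xk tau U Hxk ltac:(lra) Hcert).
  assert (Ht : 0 < (1 - exp lo) / sqrt e).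
  { pose proof (exp_increasing lo 0 Hlo). rewrite exp_0 in *.
    apply Rdiv_lt_0_compat; [lra | apply sqrt_lt_R0; lra]. }
  apply recip_sum_le_of_sqr_le_1; [exact Ht | lra |].
  replace (((1 - exp lo) / sqrt e) ^ 2) with (((exp lo - 1) / sqrt e) ^ 2)
    by (unfold Rdiv; ring).
  rewrite (slope_ratio_eq_sqr e lo Elo ltac:(lra)).
  pose proof (slope_ratio_le lo (- xk) Hlo_le ltac:(lra)). lra.
Qed.

Lemma sqr_exp_ratio_right e hi : 0 < hi -> fpot hi = 1 + e ->
  0 < (exp hi - 1) / sqrt e /\ ((exp hi - 1) / sqrt e) ^ 2 = slope_ratio hi.
Proof.
  intros Hhi Ehi. pose proof (fpot_gt_1 hi ltac:(lra)) as He. rewrite Ehi in He.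
  split; [|apply slope_ratio_eq_sqr; [exact Ehi | lra]].
  pose proof (exp_increasing 0 hi Hhi). rewrite exp_0 in *.
  apply Rdiv_lt_0_compat; [lra | apply sqrt_lt_R0; lra].
Qed.

Lemma recip_sum_right_bound_sqrt2 e hi sig :
  0 < hi -> fpot hi = 1 + e -> 1 <= sig -> sig ^ 2 <= 2 ->
  recip_sum sig <= recip_sum ((exp hi - 1) / sqrt e).
Proof.
  intros Hhi Ehi Hsig Hsig2. destruct (sqr_exp_ratio_right e hi Hhi Ehi) as [Hs Hsq].
  apply recip_sum_le_of_sqr_le; [exact Hsig | exact Hs |].
  rewrite Hsq. pose proof (slope_ratio_ge_2 hi Hhi). lra.
Qed.

(* The knot [yk] lies in [(0, hi]], so [sig ^ 2 <= slope_ratio yk <= slope_ratio hi = s ^ 2]. *)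
Lemma recip_sum_right_bound e hi yk sig L U :
  0 < hi -> fpot hi = 1 + e -> 0 < yk -> 1 <= sig -> 1 <= L -> L <= exp yk <= U ->
  U - yk - 1 <= e -> sig ^ 2 * (U - yk - 1) <= (L - 1) ^ 2 ->
  recip_sum sig <= recip_sum ((exp hi - 1) / sqrt e).
Proof.
  intros Hhi Ehi Hyk Hsig HL HLU Hknot Hcert.
  destruct (sqr_exp_ratio_right e hi Hhi Ehi) as [Hs Hsq].
  assert (Hyk_le : yk <= hi).
  { apply Rnot_lt_le. intro Hlt. pose proof (fpot_increasing_pos hi yk ltac:(lra)).
    unfold fpot in *. lra. }
  assert (Hratio : sig ^ 2 <= slope_ratio yk).
  { pose proof (fpot_gt_1 yk ltac:(lra)). unfold slope_ratio, fpot in *.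
    apply Rmult_le_reg_r with (exp yk - yk - 1); [lra|].
    unfold Rdiv. rewrite Rmult_assoc, Rinv_l, Rmult_1_r by lra.
    assert (sig ^ 2 * (exp yk - yk - 1) <= sig ^ 2 * (U - yk - 1))
      by (apply Rmult_le_compat_l; [apply pow2_ge_0 | lra]).
    assert ((L - 1) ^ 2 <= (exp yk - 1) ^ 2) by (apply pow_incr; lra).
    lra. }
  apply recip_sum_le_of_sqr_le; [exact Hsig | exact Hs |].
  rewrite Hsq. pose proof (slope_ratio_le yk hi Hyk_le ltac:(lra)). lra.
Qed.

Lemma sq_log_gt_of_ln_bound e F c beta0 :
  4 <= F -> F <= exp c -> 4 * (1 + e) + 8 * c < F * F -> F / 2 <= beta0 ->
  sq_log beta0 - (1 + e) > 0.
Proof.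
  intros HF Hc Hgap Hbeta.
  pose proof (sq_log_le (F / 2) beta0 ltac:(lra)).
  assert (ln (4 * (F / 2) ^ 2) <= 2 * c).
  { replace (4 * (F / 2) ^ 2) with (F ^ 2) by field.
    rewrite ln_pow by lra. simpl INR.
    rewrite <- (ln_exp c). pose proof (ln_le F (exp c) ltac:(lra) Hc). lra. }
  unfold sq_log in *. lra.
Qed.

Local Open Scope Q_scope.

Record side_cert := { knot : Q; bound : Q }.

(* A bound [tau = 1] needs no knot, by [recip_sum_ge_2]. *)
Definition left_cert_ok (elo : Q) (c : side_cert) : bool :=
  let (xk, tau) := c in
  Qeq_bool tau 1 ||
  match exp_bounds xk with
  | Some (L, U) =>
      Qltb 0 tau && Qle_bool tau 1 && Qle_bool 1 ((elo + 1 - xk) * L) &&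
      Qle_bool ((U - 1) * (U - 1)) (tau * tau * (U + (xk - 1) * (U * U)))
  | None => false
  end.

(* A bound [sig] with [sig ^ 2 <= 2] needs no knot, by [slope_ratio_ge_2]. *)
Definition right_cert_ok (elo : Q) (c : side_cert) : bool :=
  let (yk, sig) := c in
  Qle_bool 1 sig &&
  (Qle_bool (sig * sig) 2 ||
   match exp_bounds yk with
   | Some (L, U) =>
       Qle_bool (U - yk - 1) elo && Qle_bool (sig * sig * (U - yk - 1)) ((L - 1) * (L - 1))
   | None => false
   end).

(* [ln_cert] is a [c] with [exp c >= F], where [F = tau + 1 / tau + sig + 1 / sig]; it bounds
   [ln (4 (F / 2) ^ 2) <= 2 c]. *)
Record segment := { seg_hi : Q; left_cert : side_cert; right_cert : side_cert; ln_cert : Q }.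

Definition segment_ok (elo : Q) (s : segment) : bool :=
  let (ehi, lc, rc, c) := s in
  let F := bound lc + / bound lc + (bound rc + / bound rc) in
  left_cert_ok elo lc && right_cert_ok elo rc &&
  match exp_bounds c with
  | Some (L, _) => Qle_bool F L && Qltb (4 * (1 + ehi) + 8 * c) (F * F)
  | None => false
  end.

Fixpoint covers (elo ehi : Q) (l : list segment) : bool :=
  match l with
  | [] => false
  | s :: l' => segment_ok elo s && (Qle_bool ehi (seg_hi s) || covers (seg_hi s) ehi l')
  end.

Local Close Scope Q_scope.

Ltac Q2R_simpl :=
  repeat first [rewrite Q2R_plus in * | rewrite Q2R_minus in * | rewrite Q2R_mult in *];
  rewrite ?Q2R_int in *.

Ltac checks_to_R :=
  repeat match goal with H : (_ && _)%bool = true |- _ => apply andb_prop in H as [? ?] end;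
  repeat match goal with
  | H : Qle_bool _ _ = true |- _ => apply RMicromega.Qle_true in H
  | H : Qltb _ _ = true |- _ => apply Qltb_Rlt in H
  end;
  Q2R_simpl.

Lemma left_cert_sound elo c e lo : left_cert_ok elo c = true -> Q2R elo <= e ->
  lo < 0 -> fpot lo = 1 + e ->
  0 < Q2R (bound c) /\ recip_sum (Q2R (bound c)) <= recip_sum ((1 - exp lo) / sqrt e).
Proof.
  destruct c as [xk tau]. simpl. intros Hok He Hlo Elo.
  pose proof (fpot_gt_1 lo ltac:(lra)) as Hfl. rewrite Elo in Hfl.
  apply orb_prop in Hok as [Htau | Hok].
  - apply RMicromega.Qeq_true in Htau. rewrite Htau, RMicromega.Q2R_1.
    split; [lra|]. replace (recip_sum 1) with 2 by (unfold recip_sum; field).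
    apply recip_sum_ge_2. pose proof (exp_increasing lo 0 Hlo). rewrite exp_0 in *.
    apply Rdiv_lt_0_compat; [lra | apply sqrt_lt_R0; lra].
  - destruct (exp_bounds xk) as [[L U]|] eqn:Hexp; [|discriminate].
    apply exp_enclosure_spec in Hexp as [Hxk [HL HLU]].
    checks_to_R. split; [assumption|].
    apply (recip_sum_left_bound e lo (Q2R xk) (Q2R tau) (Q2R L) (Q2R U)); try assumption; nra.
Qed.

Lemma right_cert_sound elo c e hi : right_cert_ok elo c = true -> Q2R elo <= e ->
  0 < hi -> fpot hi = 1 + e ->
  1 <= Q2R (bound c) /\ recip_sum (Q2R (bound c)) <= recip_sum ((exp hi - 1) / sqrt e).
Proof.
  destruct c as [yk sig]. simpl. intros Hok He Hhi Ehi.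
  apply andb_prop in Hok as [Hsig Hok]. apply RMicromega.Qle_true in Hsig. Q2R_simpl.
  split; [exact Hsig|].
  apply orb_prop in Hok as [Hsqrt2 | Hok].
  - checks_to_R. apply recip_sum_right_bound_sqrt2; [assumption | assumption | assumption | nra].
  - destruct (exp_bounds yk) as [[L U]|] eqn:Hexp; [|discriminate].
    apply exp_enclosure_spec in Hexp as [Hyk [HL HLU]].
    checks_to_R.
    apply (recip_sum_right_bound e hi (Q2R yk) (Q2R sig) (Q2R L) (Q2R U)); try assumption; nra.
Qed.

Lemma segment_ok_sound elo s : segment_ok elo s = true ->
  forall e, Q2R elo <= e <= Q2R (seg_hi s) -> beta_claim e.
Proof.
  destruct s as [ehi lc rc c]. simpl. intros Hok e He lo hi beta0 Hlo Hhi Elo Ehi Hbeta.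
  apply andb_prop in Hok as [Hsides Hok]. apply andb_prop in Hsides as [Hl Hr].
  destruct (left_cert_sound elo lc e lo Hl ltac:(lra) Hlo Elo) as [Htau Hleft].
  destruct (right_cert_sound elo rc e hi Hr ltac:(lra) Hhi Ehi) as [Hsig Hright].
  destruct (exp_bounds c) as [[L U]|] eqn:Hexp; [|discriminate].
  apply exp_enclosure_spec in Hexp as [Hc [_ [HLc _]]].
  checks_to_R.
  rewrite !Q2R_inv in * by (intros Hz; apply Qeq_eqR in Hz; rewrite RMicromega.Q2R_0 in Hz; lra).
  pose proof (recip_sum_ge_2 (Q2R (bound lc)) Htau).
  pose proof (recip_sum_ge_2 (Q2R (bound rc)) ltac:(lra)).
  unfold beta_lower in Hbeta. replace (1 + e - 1) with e in Hbeta by ring.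
  unfold recip_sum in *.
  apply (sq_log_gt_of_ln_bound e
    (Q2R (bound lc) + / Q2R (bound lc) + (Q2R (bound rc) + / Q2R (bound rc))) (Q2R c));
    [lra | lra | nra | lra].
Qed.

Lemma covers_sound l : forall elo ehi, covers elo ehi l = true ->
  forall e, Q2R elo <= e <= Q2R ehi -> beta_claim e.
Proof.
  induction l as [|s l IH]; simpl; intros elo ehi Hok e He; [discriminate|].
  apply andb_prop in Hok as [Hs Hrest].
  destruct (Rle_or_lt e (Q2R (seg_hi s))) as [Hle | Hgt].
  - exact (segment_ok_sound elo s Hs e ltac:(lra)).
  - apply orb_prop in Hrest as [Hend | Hrest].
    + apply RMicromega.Qle_true in Hend. lra.
    + exact (IH (seg_hi s) ehi Hrest e ltac:(lra)).
Qed.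

Definition mk_segment (ehi xk tau yk sig c : Q) : segment :=
  {| seg_hi := ehi; left_cert := {| knot := xk; bound := tau |};
     right_cert := {| knot := yk; bound := sig |}; ln_cert := c |}.

Definition beta_certificates : list segment := [
  mk_segment (41#100) 0 1 0 (7071#5000) (7081#5000);
  mk_segment (881#1000) 0 1 (787#1000) (3739#2000) (14827#10000);
  mk_segment (1223#1000) (16977#10000) (1741#2000) (5441#5000) (20979#10000) (953#625);
  mk_segment (297#200) (5251#2500) (7937#10000) (3107#2500) (2787#1250) (15543#10000);
  mk_segment (847#500) (11967#5000) (3729#5000) (13419#10000) (23197#10000) (3941#2500);
  mk_segment (233#125) (2621#1000) (3563#5000) (3531#2500) (11933#5000) (15937#10000);
  mk_segment (1003#500) (28031#10000) (3441#5000) (3663#2500) (24383#10000) (8037#5000);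
  mk_segment (1063#500) (5907#2000) (3347#5000) (3767#2500) (24801#10000) (4047#2500);
  mk_segment (2229#1000) (30797#10000) (409#625) (7701#5000) (25143#10000) (8141#5000);
  mk_segment (2317#1000) (15937#5000) (6423#10000) (7839#5000) (2543#1000) (8181#5000);
  mk_segment (1197#500) (3279#1000) (6323#10000) (7953#5000) (2567#1000) (1643#1000);
  mk_segment (49#20) (33589#10000) (6239#10000) (16101#10000) (25877#10000) (16489#10000)].

Lemma beta_claim_le e : 0 < e <= 49 / 20 -> beta_claim e.
Proof.
  intros He. apply (covers_sound beta_certificates 0 (49 # 20)); [vm_compute; reflexivity|].
  rewrite RMicromega.Q2R_0. unfold Q2R; simpl. lra.
Qed.

(** * Hypotheses (b) and (c) bound [f1] *)

Lemma ln_5186_ge : 1645 / 1000 <= ln (5186 / 1000).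
Proof.
  assert (H := exp_le_of_enclosure 22 (10 ^ 12) (1645 # 1000) (5186 # 1000)
    ltac:(vm_compute; reflexivity)).
  unfold Q2R in H; simpl in H.
  rewrite <- (ln_exp (1645 / 1000)). apply ln_le; [apply exp_pos | lra].
Qed.

(* Tangent bound for [ln] at [V = 2.593], where [W_constraints_bound] switches cases. *)
Lemma ln_4_sqr_ge V : 0 < V -> 2 * (1645 / 1000) + 2 * (1 - 2593 / 1000 / V) <= ln (4 * V ^ 2).
Proof.
  intros HV.
  replace (4 * V ^ 2) with ((5186 / 1000 * (V / (2593 / 1000))) ^ 2) by (field; lra).
  rewrite ln_pow, ln_mult by (try apply Rmult_lt_0_compat; try apply Rdiv_lt_0_compat; lra).
  pose proof ln_5186_ge.
  pose proof (ln_ge_1_minus_inv (V / (2593 / 1000)) ltac:(apply Rdiv_lt_0_compat; lra)).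
  replace (/ (V / (2593 / 1000))) with (2593 / 1000 / V) in H0 by (field; lra).
  simpl INR. lra.
Qed.

Lemma PI_sqrt2_bounds : 2220 / 1000 <= PI / sqrt 2 <= 22218 / 10000.
Proof.
  destruct (PI_2_3_7_ineq 4) as [HPIl HPIu].
  unfold tg_alt, PI_2_3_7_tg, Ratan_seq in HPIl, HPIu. simpl in HPIl, HPIu.
  pose proof (sqrt_pos 2). pose proof (sqrt_sqrt 2 ltac:(lra)).
  assert (14142 / 10000 <= sqrt 2 <= 14143 / 10000) by nra.
  assert (Hc2 : PI / sqrt 2 * sqrt 2 = PI) by (field; lra).
  split; apply Rmult_le_reg_r with (sqrt 2); try lra; rewrite Hc2; nra.
Qed.

Lemma W_constraints_bound V c e1 : 2220 / 1000 <= c <= 22218 / 10000 -> c < V ->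
  3 * (V - c) * (V ^ 2 - 1) < V * e1 ->
  1 + e1 < V ^ 2 - 2 * (1645 / 1000) - 2 * (1 - 2593 / 1000 / V) ->
  e1 <= 49 / 20.
Proof.
  intros Hc HV Hder Hpos.
  assert (HVpos : 0 < V) by lra.
  assert (Hinv : 2593 / 1000 / V * V = 2593 / 1000) by (field; lra).
  assert (Hcubic : V * (1 + e1) < V ^ 3 - 2 * (1645 / 1000) * V - 2 * V + 2 * (2593 / 1000)).
  { apply Rmult_lt_compat_l with (r := V) in Hpos; [|lra]. nra. }
  apply Rnot_lt_le. intro He1.
  destruct (Rle_lt_dec V (2593 / 1000)) as [HVs | HVl].
  - nra.
  - set (d := V - 2593 / 1000) in *. replace V with (2593 / 1000 + d) in * by (unfold d; ring).
    nra.
Qed.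

Lemma Vfun_pos lambda f : 1 < f -> 0 < lambda -> PI / sqrt 2 < Vfun lambda f.
Proof.
  intros Hf Hl. unfold Vfun. pose proof (sqrt_lt_R0 (f - 1) ltac:(lra)).
  assert (0 < lambda * ((f - 1) * sqrt (f - 1))) by (apply Rmult_lt_0_compat; nra). lra.
Qed.

Lemma Derive_Wfun lambda f : 1 < f -> 0 < lambda ->
  let V' := 3 / 2 * lambda * sqrt (f - 1) in
  Derive (Wfun lambda) f = 2 * Vfun lambda f * V' - 2 * V' / Vfun lambda f - 1.
Proof.
  intros Hf Hl V'.
  pose proof (Vfun_pos lambda f Hf Hl). pose proof (proj1 PI_sqrt2_bounds).
  assert (Hs : 0 < sqrt (f - 1)) by (apply sqrt_lt_R0; lra).
  apply is_derive_unique. unfold Wfun, V'. unfold Vfun in *. auto_derive.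
  - replace (f + - (1)) with (f - 1) by ring. repeat split; try lra. nra.
  - replace (f + - (1)) with (f - 1) by ring.
    assert (Hss : sqrt (f - 1) * sqrt (f - 1) = f - 1) by (apply sqrt_sqrt; lra).
    set (s := sqrt (f - 1)) in *. replace (f - 1) with (s * s) by exact Hss. field.
    assert (0 < sqrt 2) by (apply sqrt_lt_R0; lra). pose proof PI_RGT_0.
    assert (0 < lambda * (s * s * s) * sqrt 2) by (repeat apply Rmult_lt_0_compat; lra).
    repeat split; lra.
Qed.

Lemma W_conditions_force_f1_le lambda f1 : 1 < f1 -> 0 < lambda ->
  Wfun lambda f1 > 0 -> Derive (Wfun lambda) f1 < 0 -> f1 - 1 <= 49 / 20.
Proof.
  intros Hf Hl HW HD. rewrite Derive_Wfun in HD by assumption. cbv zeta in HD.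
  pose proof PI_sqrt2_bounds as Hc. pose proof (Vfun_pos lambda f1 Hf Hl) as HV.
  assert (Hs : 0 < sqrt (f1 - 1)) by (apply sqrt_lt_R0; lra).
  assert (Hss : sqrt (f1 - 1) * sqrt (f1 - 1) = f1 - 1) by (apply sqrt_sqrt; lra).
  unfold Wfun in HW. pose proof (ln_4_sqr_ge (Vfun lambda f1) ltac:(lra)).
  assert (HVc : Vfun lambda f1 - PI / sqrt 2 = lambda * sqrt (f1 - 1) * (f1 - 1))
    by (unfold Vfun; ring).
  set (V := Vfun lambda f1) in *. set (c := PI / sqrt 2) in *.
  set (s := sqrt (f1 - 1)) in *.
  (* [W' < 0] reads [3 lambda s (V^2 - 1) < V]; multiplying by [s^2 = f1 - 1] brings in
     [V - c = lambda s^3]. *)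
  assert (Hder : 3 * (lambda * s) * (V ^ 2 - 1) < V).
  { assert (2 * (3 / 2 * lambda * s) / V * V = 2 * (3 / 2 * lambda * s)) by (field; lra).
    nra. }
  apply (W_constraints_bound V c (f1 - 1)); [exact Hc | lra | | lra].
  rewrite HVc, <- Hss.
  replace (3 * (lambda * s * (s * s)) * (V ^ 2 - 1)) with (s * s * (3 * (lambda * s) * (V ^ 2 - 1)))
    by ring.
  rewrite (Rmult_comm V). apply Rmult_lt_compat_l; nra.
Qed.

Theorem proposition2p7 (lambda f1 : R) :
  1 < f1 ->
  0 < lambda ->
  lambda < 2 * J f1 / (3 * (f1 - 1)) ->
  Wfun lambda f1 > 0 ->
  Derive (Wfun lambda) f1 < 0 ->
  forall f0 : R, 1 < f0 < f1 ->
    (beta f0) ^ 2 - ln (4 * (beta f0) ^ 2) - f0 > 0.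
Proof.
  intros Hf1 Hl _ HW HD f0 [Hf0 Hf01].
  pose proof (W_conditions_force_f1_le lambda f1 Hf1 Hl HW HD).
  destruct (phi_lo_spec f0 Hf0) as [Hlo Elo]. destruct (phi_hi_spec f0 Hf0) as [Hhi Ehi].
  enough (sq_log (beta f0) - (1 + (f0 - 1)) > 0) by (unfold sq_log in *; lra).
  apply (beta_claim_le (f0 - 1) ltac:(lra) (phi_lo f0) (phi_hi f0)); try lra.
  replace (1 + (f0 - 1)) with f0 by ring. apply beta_lower_le_beta; lra.
Qed.
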